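(* Under the hypotheses of Lemma 1 (real random variable $\hat g_i$ with mean $g_i\ne0$, variance $\sigma_i^2>0$, unimodal and symmetric distribution about $g_i$), one has $$\mathrm{Prob}(\mathrm{sign}\,\hat g_i=\mathrm{sign}\,g_i)\ge1-\frac12\cdot\frac{1}{1+z+z^2},\qquad z:=\frac{|g_i|}{\sqrt3\sigma_i}.$$
   Context: $\mathrm{sign}\,t=1,0,-1$ for $t>0,t=0,t<0$. *)

From HB Require Import structures.
From mathcomp Require Import all_boot all_order all_algebra.
From mathcomp Require Import all_classical all_reals all_analysis.
Set Implicit Arguments. Unset Strict Implicit. Unset Printing Implicit Defensive.
Import Order.TTheory GRing.Theory Num.Theory.
Local Open Scope classical_set_scope.
Local Open Scope ring_scope.

Definition convex_on (R : realType) (I : set R) (f : R -> R) : Prop :=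
  forall x y t : R, I x -> I y -> 0 <= t -> t <= 1 ->
    f (t * x + (1 - t) * y) <= t * f x + (1 - t) * f y.

Definition concave_on (R : realType) (I : set R) (f : R -> R) : Prop :=
  convex_on I (fun x => - f x).

(* Unimodal distribution (Khintchine): there is a mode m such that the
   cumulative distribution function is convex on (-oo, m) and concave
   on (m, +oo). *)
Definition unimodal_RV d (T : measurableType d) (R : realType)
  (P : probability T R) (X : {RV P >-> R}) : Prop :=
  exists m : R,
    convex_on [set x | x < m] (fun x => fine (cdf X x)) /\
    concave_on [set x | m < x] (fun x => fine (cdf X x)).

Definition symmetric_RV_about d (T : measurableType d) (R : realType)
  (P : probability T R) (X : T -> R) (c : R) : Prop :=
  forall A : set R, measurable A ->
    P (X @^-1` A) = P ((fun w => 2 * c - X w) @^-1` A).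

(* Let k = |g| and let w be the probability that sg X differs from sg g. For
   0 < t < k the mismatch event lies in both tails {X <= g - t} and
   {X > g + t}. Symmetry about g gives P(|X - g| > t) = 2 P(X > g + t), and
   unimodality makes one of t |-> 2 P(X <= g - t), t |-> 2 P(X > g + t) a
   convex function D on (0, +oo) with D >= 2w on (0, k) and D(t') <= P(|X - g| > t)
   for t < t'. The supporting line a - b t of D at k is then a minorant of
   P(|X - g| > t), and the layer-cake formula
   sigma^2 = \int_0^oo P(|X - g| > sqrt r) dr >= \int_0^((a/b)^2) (a - b sqrt r) dr
   = a^3 / (3 b^2) bounds its slope from below. Since a - b k = D(k) >= 2w and
   a <= 1, an elementary inequality gives 2w (1 + z + z^2) <= 1. *)

From HB Require Import structures.
From mathcomp Require Import all_boot all_order all_algebra.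
From mathcomp Require Import all_classical all_reals all_analysis.
From mathcomp Require Import measurable_realfun ring lra.
Set Implicit Arguments. Unset Strict Implicit. Unset Printing Implicit Defensive.
Import Order.TTheory GRing.Theory Num.Theory.
Import numFieldNormedType.Exports.
Local Open Scope classical_set_scope.
Local Open Scope ring_scope.

Section convex_on_facts.
Variable R : realType.
Implicit Types (D : R -> R) (I : set R).

Lemma convex_on_chord I D u k v : convex_on I D -> I u -> I v -> u < k -> k < v ->
  D k * (v - u) <= (v - k) * D u + (k - u) * D v.
Proof.
move=> cD Iu Iv uk kv; have vu : 0 < v - u by lra.
set t := (v - k) / (v - u).
have t0 : 0 <= t by rewrite divr_ge0 //; lra.
have t1 : t <= 1 by rewrite ler_pdivrMr //; lra.
have := cD u v t Iu Iv t0 t1.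
have -> : t * u + (1 - t) * v = k by rewrite /t; field; lra.
rewrite -(ler_pM2r vu).
have -> : (t * D u + (1 - t) * D v) * (v - u) = (v - k) * D u + (k - u) * D v.
  by rewrite /t; field; lra.
by [].
Qed.

Lemma convex_on_supporting_line D k : convex_on [set t | 0 < t] D -> 0 < k ->
  exists s, forall t, 0 < t -> D k + s * (t - k) <= D t.
Proof.
move=> cD k0.
pose S := [set (D k - D u) / (k - u) | u in [set u | 0 < u < k]].
have ubS v : k < v -> ubound S ((D v - D k) / (v - k)).
  move=> kv _ [u /andP[u0 uk] <-].
  have := convex_on_chord cD u0 (lt_trans k0 kv : 0 < v) uk kv.
  rewrite ler_pdivrMr ?subr_gt0 // mulrAC ler_pdivlMr ?subr_gt0 //; nra.
have S0 : S !=set0 by exists ((D k - D (k / 2)) / (k - k / 2)); exists (k / 2) => //; apply/andP; lra.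
have supS : has_sup S by split => //; exists ((D (2 * k) - D k) / (2 * k - k)); apply: ubS; lra.
exists (sup S) => t t0.
have [tk|kt|<-] := ltgtP t k; last by lra.
- have /(sup_upper_bound supS) : S ((D k - D t) / (k - t)) by exists t => //; apply/andP.
  rewrite ler_pdivrMr ?subr_gt0 //; nra.
- have := ge_sup S0 (ubS t kt).
  rewrite ler_pdivlMr ?subr_gt0 //; nra.
Qed.

Lemma convex_on_ge_at_endpoint D k p : convex_on [set t | 0 < t] D -> 0 < k ->
  (forall t, 0 < t -> 0 <= D t) -> (forall t, 0 < t -> D t <= 1) ->
  (forall t, 0 < t -> t < k -> p <= D t) -> p <= D k.
Proof.
move=> cD k0 D0 D1 Dp; apply/ler_addgt0Pr => e e0.
set l := e / (1 + e).
have l0 : 0 < l by rewrite divr_gt0 //; lra.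
have l1 : l <= 1 by rewrite ler_pdivrMr; lra.
have le : l <= e by rewrite ler_pdivrMr; nra.
have := cD (k / 2) k l ltac:(rewrite /=; lra) k0 (ltW l0) l1.
have := Dp (l * (k / 2) + (1 - l) * k) ltac:(nra) ltac:(nra).
have := D1 (k / 2) ltac:(lra); have := D0 k k0.
nra.
Qed.

Lemma convex_on_scale I D c : 0 <= c -> convex_on I D -> convex_on I (fun x => c * D x).
Proof.
move=> c0 cD x y t Ix Iy t0 t1.
have -> : t * (c * D x) + (1 - t) * (c * D y) = c * (t * D x + (1 - t) * D y) by ring.
exact: ler_wpM2l (cD x y t Ix Iy t0 t1).
Qed.

End convex_on_facts.

(* With [u := c / a >= a z], the left-hand side is at most
   [(1 - u) (1 + u + u^2) = 1 - u^3]. *)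
Lemma line_drop_ineq (R : realFieldType) (a c z : R) :
  0 < a -> a <= 1 -> 0 <= c -> c <= a -> 0 <= z ->
  a ^+ 3 * z ^+ 2 <= c ^+ 2 -> (a - c) * (1 + z + z ^+ 2) <= 1.
Proof.
move=> a0 a1 c0 ca z0 acz.
set u := c / a.
have cE : c = u * a by rewrite /u divfK // gt_eqF.
have u0 : 0 <= u by rewrite divr_ge0 // ltW.
have u1 : u <= 1 by rewrite ler_pdivrMr //; lra.
have az2u : a * z ^+ 2 <= u ^+ 2.
  have a2 : 0 < a ^+ 2 by rewrite exprn_gt0.
  rewrite -(ler_pM2l a2) mulrA -exprSr.
  by rewrite -exprMn [a * u]mulrC -cE.
have azu : a * z <= u.
  have : (a * z) ^+ 2 <= u ^+ 2.
    rewrite exprMn; apply: le_trans az2u.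
    by rewrite ler_wpM2r ?sqr_ge0 // expr2 ger_pMl.
  by rewrite !expr2; nra.
have -> : (a - c) * (1 + z + z ^+ 2) = (1 - u) * (a + a * z + a * z ^+ 2).
  by rewrite cE; ring.
apply: (@le_trans _ _ ((1 - u) * (1 + u + u ^+ 2))).
  by apply: ler_wpM2l; lra.
have -> : (1 - u) * (1 + u + u ^+ 2) = 1 - u ^+ 3 by ring.
by rewrite gerBl exprn_ge0.
Qed.

(* [D] stands for a doubled one-sided tail of [X - g] and [G] for the
   two-sided tail [t |-> P(|X - g| > t)]. *)
Section convex_tail_bound.
Variables (R : realType) (D G : R -> R) (sigma : R).
Hypothesis sigma_gt0 : 0 < sigma.
Hypothesis D_convex : convex_on [set t | 0 < t] D.
Hypothesis D_ge0 : forall t : R, 0 < t -> 0 <= D t.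
Hypothesis D_le1 : forall t : R, 0 < t -> D t <= 1.
Hypothesis D_le_G : forall t t' : R, 0 <= t -> t < t' -> D t' <= G t.
Hypothesis line_minorant_moment : forall a b : R, 0 < a -> 0 < b ->
  (forall t : R, 0 <= t -> a - b * t <= G t) -> a ^+ 3 / (3 * b ^+ 2) <= sigma ^+ 2.

Lemma line_minorant_G (a b : R) : 0 < b -> (forall t : R, 0 < t -> a - b * t <= D t) ->
  forall t, 0 <= t -> a - b * t <= G t.
Proof.
move=> b0 Dab t t0; apply/ler_addgt0Pr => e e0.
have ebt : 0 < e / b by rewrite divr_gt0.
have := D_le_G t0 (_ : t < t + e / b); rewrite ltrDl => /(_ ebt).
have := Dab (t + e / b) ltac:(lra).
rewrite mulrDr mulrCA divff ?gt_eqF // mulr1; lra.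
Qed.

Lemma const_minorant_le0 (p : R) : (forall t : R, 0 < t -> p <= D t) -> p <= 0.
Proof.
move=> Dp; rewrite leNgt; apply/negP => p0.
have p1 : p <= 1 by apply: le_trans (Dp 1 ltr01) (D_le1 ltr01).
pose b : R := p ^+ 2 / (2 * sigma).
have b0 : 0 < b by rewrite divr_gt0 ?exprn_gt0 ?mulr_gt0.
have pbD t : 0 < t -> p - b * t <= D t.
  by move=> t0; have := Dp t t0; have := mulr_gt0 b0 t0; lra.
have := line_minorant_moment p0 b0 (line_minorant_G b0 pbD).
have -> : p ^+ 3 / (3 * b ^+ 2) = 4 / (3 * p) * sigma ^+ 2.
  by rewrite /b; field; move: sigma_gt0; lra.
by rewrite ger_pMl ?exprn_gt0 // ler_pdivrMr; lra.
Qed.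

Lemma convex_tail_bound (k z p : R) : 0 < k -> 0 <= z -> k = Num.sqrt 3 * sigma * z ->
  (forall t : R, 0 < t -> t < k -> p <= D t) -> p * (1 + z + z ^+ 2) <= 1.
Proof.
move=> k0 z0 kE Dp.
have [s Ds] := convex_on_supporting_line D_convex k0.
have pDk := convex_on_ge_at_endpoint D_convex k0 D_ge0 D_le1 Dp.
have [s_neg|s_ge0] := ltP s 0; last first.
  have p_le0 : p <= 0.
    apply: const_minorant_le0 => t t0; have [tk|kt] := ltP t k; first exact: Dp.
    have : 0 <= s * (t - k) by rewrite mulr_ge0 // subr_ge0.
    by have := Ds t t0; lra.
  by have := sqr_ge0 z; nra.
set b := - s; set a := D k + b * k.
have b0 : 0 < b by rewrite oppr_gt0.
have Dab t : 0 < t -> a - b * t <= D t by move=> /Ds; rewrite /a /b; lra.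
have a0 : 0 < a by have := D_ge0 k0; have := mulr_gt0 b0 k0; rewrite /a; lra.
have a1 : a <= 1.
  apply/ler_addgt0Pr => e e0; have ebt : 0 < e / b by rewrite divr_gt0.
  by have := Dab _ ebt; have := D_le1 ebt; rewrite mulrCA divff ?gt_eqF // mulr1; lra.
have a3 : a ^+ 3 <= 3 * b ^+ 2 * sigma ^+ 2.
  have := line_minorant_moment a0 b0 (line_minorant_G b0 Dab).
  by rewrite ler_pdivrMr ?mulr_gt0 ?exprn_gt0 // mulrC.
have az_bk : a ^+ 3 * z ^+ 2 <= (b * k) ^+ 2.
  rewrite kE !exprMn sqr_sqrtr // mulrA; apply: ler_wpM2r; first exact: sqr_ge0.
  by rewrite mulrA [_ * 3]mulrC.
have bk_a : b * k <= a by have := D_ge0 k0; rewrite /a; lra.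
have := line_drop_ineq a0 a1 (mulr_ge0 (ltW b0) (ltW k0)) bk_a z0 az_bk.
rewrite /a addrK; apply: le_trans.
by rewrite ler_wpM2r // addr_ge0 ?sqr_ge0 ?addr_ge0.
Qed.

End convex_tail_bound.

Lemma continuous_sub_mul_sqrt (R : realType) (a b : R) :
  forall x : R, {for x, continuous (fun r : R => a - b * Num.sqrt r)}.
Proof.
move=> x; apply: continuousB; first exact: cvg_cst.
by apply: continuousM; [exact: cvg_cst | exact: sqrt_continuous].
Qed.

Lemma integral_sub_mul_sqrt (R : realType) (a b : R) : 0 < a -> 0 < b ->
  (\int[lebesgue_measure]_(r in `[0%R, ((a / b) ^+ 2)%R]) (a - b * Num.sqrt r)%R%:E =
   (a ^+ 3 / (3 * b ^+ 2))%R%:E)%E.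
Proof.
move=> a0 b0; set c := (a / b) ^+ 2.
have c0 : 0 < c by rewrite exprn_gt0 // divr_gt0.
pose F r := a * r - (2 * b / 3) * (r * Num.sqrt r).
have F_cont : forall x : R, {for x, continuous F}.
  move=> x; apply: continuousB; first by apply: continuousM; [exact: cvg_cst | exact: cvg_id].
  apply: continuousM; first exact: cvg_cst.
  by apply: continuousM; [exact: cvg_id | exact: sqrt_continuous].
have F_derive (r : R) : 0 < r -> is_derive r 1 F (a - b * Num.sqrt r).
  move=> r0; have s0 : 0 < Num.sqrt r by rewrite sqrtr_gt0.
  have dF := is_deriveB (is_deriveZ a (is_derive_id r 1))
    (is_deriveZ (2 * b / 3) (is_deriveM (is_derive_id r 1) (is_derive1_sqrt r0))).
  have -> : F = (a *: id - (2 * b / 3) *: (id * Num.sqrt))%R by apply/funext.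
  apply: (is_derive_eq dF); change (a * 1 - (2 * b / 3) *
    (r * (2 * Num.sqrt r)^-1 + Num.sqrt r * 1) = a - b * Num.sqrt r).
  have {1}-> : r = Num.sqrt r ^+ 2 by rewrite sqr_sqrtr // ltW.
  by field; rewrite gt_eqF.
rewrite (@continuous_FTC2 R _ F 0 c c0).
- rewrite /F !mul0r !mulr0 subr0 sube0 /c sqrtr_sqr ger0_norm ?divr_ge0 ?ltW //.
  by congr (_%:E); field; rewrite gt_eqF.
- by apply: continuous_subspaceT => x; exact: continuous_sub_mul_sqrt.
- split.
  + by move=> x; rewrite in_itv /= => /andP[x0 _]; exact: (ex_derive (is_derive := F_derive x x0)).
  + exact: cvg_at_right_filter (F_cont 0).
  + exact: cvg_at_left_filter (F_cont c).
- move=> x; rewrite in_itv /= => /andP[x0 _].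
  by rewrite derive1E; exact: (derive_val (is_derive := F_derive x x0)).
Qed.

Definition pr d (T : measurableType d) (R : realType) (P : probability T R)
  (A : set T) : R := fine (P A).

Section pr_lemmas.
Context d (T : measurableType d) (R : realType) (P : probability T R).
Implicit Types A B : set T.

Lemma prE A : measurable A -> P A = (pr P A)%:E.
Proof. by move=> mA; rewrite /pr fineK // fin_num_measure. Qed.

Lemma pr_ge0 A : 0 <= pr P A.
Proof. by rewrite /pr fine_ge0. Qed.

Lemma pr_le1 A : measurable A -> pr P A <= 1.
Proof. by move=> mA; rewrite -lee_fin -prE //; exact: probability_le1. Qed.

Lemma le_pr A B : measurable A -> measurable B -> A `<=` B -> pr P A <= pr P B.
Proof. by move=> mA mB AB; rewrite -lee_fin -!prE //; apply: le_measure; rewrite ?inE. Qed.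

Lemma pr_setU A B : measurable A -> measurable B -> A `&` B = set0 ->
  pr P (A `|` B) = pr P A + pr P B.
Proof.
move=> mA mB AB0; apply: EFin_inj.
by rewrite EFinD -!prE //; [exact: measureU | exact: measurableU].
Qed.

Lemma pr_setC A : measurable A -> pr P (~` A) = 1 - pr P A.
Proof.
move=> mA; apply: EFin_inj.
by rewrite EFinB -!prE //; [exact: probability_setC | exact: measurableC].
Qed.

Lemma pr_setU_le1 A B : measurable A -> measurable B -> A `&` B = set0 ->
  pr P A + pr P B <= 1.
Proof. by move=> mA mB AB0; rewrite -pr_setU //; apply: pr_le1; exact: measurableU. Qed.

End pr_lemmas.

(* Layer-cake formula [E (X - g)^2 = \int_0^oo P(|X - g| > sqrt r) dr] against
   the minorant [a - b sqrt r], which is nonnegative up to [r = (a/b)^2]. *)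
Lemma variance_ge_tail_line d (T : measurableType d) (R : realType)
    (P : probability T R) (X : {RV P >-> R}) (g sigma a b : R) :
  ('E_P[X] = g%:E)%E -> ('V_P[X] = (sigma ^+ 2)%:E)%E -> 0 < a -> 0 < b ->
  (forall t : R, 0 <= t -> a - b * t <= pr P [set w | t < `|X w - g|]) ->
  a ^+ 3 / (3 * b ^+ 2) <= sigma ^+ 2.
Proof.
move=> EX VX a0 b0 tail_ge.
pose Y : {RV P >-> R} := ((X - cst g) * (X - cst g))%R.
have YE w : Y w = (X w - g) ^+ 2 by rewrite /= expr2.
have Y0 w : 0 <= Y w by rewrite YE sqr_ge0.
have : ('V_P[X] = 'E_P[Y])%E by rewrite /variance unlock EX.
rewrite ge0_expectation_ccdf // VX -lee_fin => ->.
rewrite -integral_sub_mul_sqrt //; set c := (a / b) ^+ 2.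
have c0 : 0 <= c by rewrite sqr_ge0.
apply: (@le_trans _ _ (\int[lebesgue_measure]_(r in `[0%R, c]) ccdf Y r)%E).
  apply: ge0_le_integral => //.
  - move=> r; rewrite /= in_itv /= => /andP[r0 rc].
    have sr : Num.sqrt r <= a / b.
      by rewrite -[a / b](ger0_norm (divr_ge0 (ltW a0) (ltW b0))) -sqrtr_sqr ler_sqrt.
    by rewrite lee_fin subr_ge0 -[leRHS](divfK (lt0r_neq0 b0)) mulrC ler_pM2r.
  - apply/measurable_EFinP; apply: measurable_funTS.
    by apply: continuous_measurable_fun => x; exact: continuous_sub_mul_sqrt.
  - exact: measurable_funTS (ccdf_measurable Y).
  - move=> r; rewrite /= in_itv /= => /andP[r0 _].
    have Y_gt w : (r < Y w) = (Num.sqrt r < `|X w - g|).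
      by rewrite YE -sqrtr_sqr !ltNge ler_sqrt.
    have SE : [set w | Num.sqrt r < `|X w - g|] = Y @^-1` `]r, +oo[.
      by apply/seteqP; split => w; rewrite /preimage /= in_itv /= andbT Y_gt.
    have mS : measurable [set w | Num.sqrt r < `|X w - g|].
      by rewrite SE; exact: measurable_funPTI.
    have -> : ccdf Y r = P [set w | Num.sqrt r < `|X w - g|] by rewrite SE.
    by rewrite prE // lee_fin tail_ge // sqrtr_ge0.
apply: ge0_subset_integral => //.
- exact: measurable_funTS (ccdf_measurable Y).
- by move=> r /=; rewrite !in_itv /= => /andP[-> _].
Qed.

Section tails.
Context d (T : measurableType d) (R : realType) (P : probability T R).
Variables (X : {RV P >-> R}) (g : R).
Implicit Types t : R.

Definition lower_tail t := pr P (X @^-1` `]-oo, g - t]).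
Definition upper_tail t := pr P (X @^-1` `]g + t, +oo[).

Let mX (i : interval R) : measurable (X @^-1` [set` i]).
Proof. exact: measurable_funPTI. Qed.

Lemma upper_tail_le t t' : t <= t' -> upper_tail t' <= upper_tail t.
Proof. by move=> tt'; apply: le_pr => // w /=; rewrite !in_itv /= !andbT; lra. Qed.

Lemma upper_tailE t : upper_tail t = 1 - fine (cdf X (g + t)).
Proof.
rewrite /upper_tail -pr_setC //; congr (pr P _).
by apply/seteqP; split => w; rewrite /preimage /setC /= !in_itv /= ?andbT; lra.
Qed.

Lemma convex_lower_tail m : g <= m ->
  convex_on [set x | x < m] (fun x => fine (cdf X x)) ->
  convex_on [set t | 0 < t] lower_tail.
Proof.
move=> gm cdf_cvx x y l /= x0 y0 l0 l1.
have := cdf_cvx (g - x) (g - y) l ltac:(rewrite /=; lra) ltac:(rewrite /=; lra) l0 l1.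
by have -> : l * (g - x) + (1 - l) * (g - y) = g - (l * x + (1 - l) * y) by ring.
Qed.

Lemma convex_upper_tail m : m <= g ->
  concave_on [set x | m < x] (fun x => fine (cdf X x)) ->
  convex_on [set t | 0 < t] upper_tail.
Proof.
move=> mg cdf_ccv x y l /= x0 y0 l0 l1; rewrite !upper_tailE.
have := cdf_ccv (g + x) (g + y) l ltac:(rewrite /=; lra) ltac:(rewrite /=; lra) l0 l1.
have -> : l * (g + x) + (1 - l) * (g + y) = g + (l * x + (1 - l) * y) by ring.
lra.
Qed.

Hypothesis X_sym : symmetric_RV_about P X g.

Lemma lower_open_tail t : pr P (X @^-1` `]-oo, g - t[) = upper_tail t.
Proof.
rewrite /pr (X_sym (measurable_itv _)); congr (fine (P _)).
by apply/seteqP; split => w; rewrite /preimage /= !in_itv /= ?andbT; lra.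
Qed.

Lemma lower_tail_sym t : lower_tail t = pr P (X @^-1` `[g + t, +oo[).
Proof.
rewrite /lower_tail /pr (X_sym (measurable_itv _)); congr (fine (P _)).
by apply/seteqP; split => w; rewrite /preimage /= !in_itv /= ?andbT; lra.
Qed.

Lemma abs_tailE t : 0 <= t ->
  pr P [set w | t < `|X w - g|] = 2 * upper_tail t.
Proof.
move=> t0.
have -> : [set w | t < `|X w - g|] =
    X @^-1` `]-oo, g - t[ `|` X @^-1` `]g + t, +oo[.
  apply/seteqP; split => w; rewrite /preimage /setU /= !in_itv /= ?andbT ltr_normr.
    by move=> /orP[] h; [right | left]; lra.
  by case=> h; apply/orP; [right | left]; lra.
rewrite pr_setU // ?lower_open_tail -/(upper_tail t); first ring.
by apply/seteqP; split => // w; rewrite /preimage /setI /= !in_itv /= ?andbT; lra.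
Qed.

Lemma upper_tail_le_half t : 0 <= t -> 2 * upper_tail t <= 1.
Proof.
move=> t0; rewrite mulr_natl mulr2n -{1}lower_open_tail.
apply: pr_setU_le1 => //.
by apply/seteqP; split => // w; rewrite /preimage /setI /= !in_itv /= ?andbT; lra.
Qed.

Lemma lower_tail_le_half t : 0 < t -> 2 * lower_tail t <= 1.
Proof.
move=> t0; rewrite mulr_natl mulr2n {2}lower_tail_sym.
apply: pr_setU_le1 => //.
by apply/seteqP; split => // w; rewrite /preimage /setI /= !in_itv /= ?andbT; lra.
Qed.

Lemma lower_tail_le_upper t t' : t < t' -> lower_tail t' <= upper_tail t.
Proof.
move=> tt'; rewrite -lower_open_tail.
by apply: le_pr => // w; rewrite /preimage /= !in_itv /=; lra.
Qed.

End tails.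

Lemma sgr_eq_gt0 (R : realDomainType) (x y : R) : 0 < y -> Num.sg x = Num.sg y <-> 0 < x.
Proof. by move=> y0; rewrite (gtr0_sg y0); split=> [/eqP|/gtr0_sg]; rewrite ?sgr_cp0. Qed.

Lemma sgr_eq_lt0 (R : realDomainType) (x y : R) : y < 0 -> Num.sg x = Num.sg y <-> x < 0.
Proof. by move=> y0; rewrite (ltr0_sg y0); split=> [/eqP|/ltr0_sg]; rewrite ?sgr_cp0. Qed.

(* The mismatch event [sg X <> sg g] is [X <= 0] for [g > 0] and [X >= 0] for
   [g < 0]; within distance [|g|] of [g] it lies in both tails. *)
Lemma sign_mismatch_tails d (T : measurableType d) (R : realType)
    (P : probability T R) (X : {RV P >-> R}) (g : R) :
  symmetric_RV_about P X g -> g != 0 ->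
  exists2 w, P [set w | Num.sg (X w) = Num.sg g] = (1 - w)%:E &
    forall t, 0 < t -> t < `|g| -> w <= lower_tail X g t /\ w <= upper_tail X g t.
Proof.
have mX (i : interval R) : measurable (X @^-1` [set` i]) by exact: measurable_funPTI.
move=> X_sym g0; have [g_lt0|g_gt0|g_eq0] := ltgtP g 0; last by rewrite g_eq0 eqxx in g0.
- exists (pr P (X @^-1` `[0, +oo[)).
    have -> : [set w | Num.sg (X w) = Num.sg g] = ~` (X @^-1` `[0, +oo[).
      apply/seteqP; split => w; rewrite /preimage /setC /= in_itv /= andbT.
        by move=> /(sgr_eq_lt0 _ g_lt0); lra.
      by move=> /negP; rewrite -ltNge => /(sgr_eq_lt0 _ g_lt0).
    by rewrite probability_setC // prE.
  move=> t t0; rewrite ltr0_norm // => tg; split.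
    by rewrite lower_tail_sym //; apply: le_pr => // w; rewrite /preimage /= !in_itv /= !andbT; lra.
  by apply: le_pr => // w; rewrite /preimage /= !in_itv /= !andbT; lra.
- exists (pr P (X @^-1` `]-oo, 0])).
    have -> : [set w | Num.sg (X w) = Num.sg g] = ~` (X @^-1` `]-oo, 0]).
      apply/seteqP; split => w; rewrite /preimage /setC /= in_itv /=.
        by move=> /(sgr_eq_gt0 _ g_gt0); lra.
      by move=> /negP; rewrite -ltNge => /(sgr_eq_gt0 _ g_gt0).
    by rewrite probability_setC // prE.
  move=> t t0; rewrite gtr0_norm // => tg; split.
    by apply: le_pr => // w; rewrite /preimage /= !in_itv /=; lra.
  by rewrite -lower_open_tail //; apply: le_pr => // w; rewrite /preimage /= !in_itv /=; lra.
Qed.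

Lemma sign_mismatch_bound d (T : measurableType d) (R : realType)
    (P : probability T R) (X : {RV P >-> R}) (g sigma z p : R) :
  ('E_P[X] = g%:E)%E -> g != 0 -> 0 < sigma -> ('V_P[X] = (sigma ^+ 2)%:E)%E ->
  unimodal_RV X -> symmetric_RV_about P X g ->
  0 <= z -> `|g| = Num.sqrt 3 * sigma * z ->
  (forall t, 0 < t -> t < `|g| -> p <= lower_tail X g t /\ p <= upper_tail X g t) ->
  2 * p * (1 + z + z ^+ 2) <= 1.
Proof.
move=> EX g0 s0 VX [m [cdf_cvx cdf_ccv]] X_sym z0 gE p_tails.
have k0 : 0 < `|g| by rewrite normr_gt0.
pose G t := pr P [set w | t < `|X w - g|].
have moment a b : 0 < a -> 0 < b -> (forall t, 0 <= t -> a - b * t <= G t) ->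
    a ^+ 3 / (3 * b ^+ 2) <= sigma ^+ 2 by exact: variance_ge_tail_line.
have [gm|mg] := leP g m.
- apply: (@convex_tail_bound _ _ G _ s0
    (convex_on_scale (ler0n _ 2) (convex_lower_tail gm cdf_cvx)) _ _ _ moment _ _ _ k0 z0 gE).
  + by move=> t _; rewrite mulr_ge0 ?pr_ge0.
  + by move=> t; apply: lower_tail_le_half.
  + move=> t t' t0 tt'; rewrite /G abs_tailE // ler_pM2l //.
    exact: lower_tail_le_upper.
  + by move=> t t0 tg; rewrite ler_pM2l //; have [] := p_tails t t0 tg.
- apply: (@convex_tail_bound _ _ G _ s0
    (convex_on_scale (ler0n _ 2) (convex_upper_tail (ltW mg) cdf_ccv)) _ _ _ moment _ _ _ k0 z0 gE).
  + by move=> t _; rewrite mulr_ge0 ?pr_ge0.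
  + by move=> t t0; apply: upper_tail_le_half; rewrite // ltW.
  + move=> t t' t0 tt'; rewrite /G abs_tailE // ler_pM2l //.
    exact: upper_tail_le (ltW tt').
  + by move=> t t0 tg; rewrite ler_pM2l //; have [] := p_tails t t0 tg.
Qed.

Theorem mainTheorem8 (d : measure_display) (T : measurableType d)
  (R : realType) (P : probability T R) (X : {RV P >-> R}) (g sigma : R) :
  (X : T -> R) \in Lfun P 2%:E ->
  ('E_P[X] = g%:E)%E ->
  g != 0 ->
  0 < sigma ->
  ('V_P[X] = (sigma ^+ 2)%:E)%E ->
  unimodal_RV X ->
  symmetric_RV_about P X g ->
  let z := `|g| / (Num.sqrt 3 * sigma) in
  ((1 - 2^-1 * (1 + z + z ^+ 2)^-1)%:E <=
     P [set w | Num.sg (X w) = Num.sg g])%E.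
Proof.
move=> _ EX g0 s0 VX X_unimodal X_sym; cbv zeta.
set z := `|g| / (Num.sqrt 3 * sigma).
have s3 : 0 < Num.sqrt 3 * sigma by rewrite mulr_gt0 ?sqrtr_gt0.
have z0 : 0 <= z by rewrite divr_ge0 // ltW.
have gE : `|g| = Num.sqrt 3 * sigma * z by rewrite /z mulrC divfK ?gt_eqF.
have [w -> w_tails] := sign_mismatch_tails X_sym g0.
have bound := sign_mismatch_bound EX g0 s0 VX X_unimodal X_sym z0 gE w_tails.
have Q0 : 0 < 1 + z + z ^+ 2 by have := sqr_ge0 z; lra.
rewrite lee_fin -invfM lerD2l lerN2 -[leRHS]mul1r ler_pdivlMr ?mulr_gt0 //.
lra.
Qed.
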